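(* Let $\alpha,\beta$ be positive integers and let $h$ be a real-valued function differentiable on an open neighbourhood of $\mathcal{U}_2$ in $\mathbb{C}^{2\times2}$, with $h(\Psi D)=h(\Psi)$ for all $\Psi\in\mathcal{U}_2$ and diagonal unitary $D$, such that $h(\Psi(\theta,\phi))=z_{\alpha,\beta}(\theta,\phi)^TMz_{\alpha,\beta}(\theta,\phi)+C$ for all $\theta,\phi\in\mathbb{R}$, for some real symmetric $M\in\mathbb{R}^{3\times3}$ and $C\in\mathbb{R}$. Let $\lambda_1\ge\lambda_2\ge\lambda_3$ be the eigenvalues of $M$ with orthonormal eigenvectors $w,u,v$, where $w_1\ge0$, and assume $u_1=0$ or $v_1=0$. Let $\theta_*\in[0,\pi/(2\alpha)]$ and $\phi_*\in\mathbb{R}$ satisfy $z_{\alpha,\beta}(\theta_*,\phi_* )=w$, and $\Psi_*=\Psi(\theta_*,\phi_* )$. Then $$h(\Psi_* )-h(I_2)\ge\frac{\sqrt2}{8\alpha}\,\|\operatorname{grad}h(I_2)\|\,\|\Psi_*-I_2\|.$$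
   Context: $\mathcal{U}_2$ is the group of $2\times2$ unitary matrices; $\|\cdot\|$ the Frobenius norm; $\mathbb{C}^{2\times2}$ carries the real inner product $\mathrm{Re}\,\mathrm{tr}(X^HY)$; $\nabla h=\partial h/\partial X^{\Re}+\mathrm{i}\,\partial h/\partial X^{\Im}$ and $\operatorname{grad}h(U)=U\,\mathrm{skew}(U^H\nabla h(U))$ with $\mathrm{skew}(P)=\frac12(P-P^H)$. $\Psi(\theta,\phi)=\begin{bmatrix}\cos\theta&-\sin\theta e^{\mathrm{i}\phi}\\ \sin\theta e^{-\mathrm{i}\phi}&\cos\theta\end{bmatrix}$ and $z_{\alpha,\beta}(\theta,\phi)=(\cos\alpha\theta,-\sin\alpha\theta\cos\beta\phi,-\sin\alpha\theta\sin\beta\phi)^T$. *)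

From HB Require Import structures.
From mathcomp Require Import all_boot all_order all_algebra.
From mathcomp Require Import all_classical all_reals all_analysis.
From mathcomp Require Import complex.
Set Implicit Arguments. Unset Strict Implicit. Unset Printing Implicit Defensive.
Import Order.TTheory GRing.Theory Num.Theory.
Import numFieldNormedType.Exports.
Local Open Scope ring_scope.
Local Open Scope classical_set_scope.

Section Defs.
Variable R : realType.

Definition mx2 {T : Type} (a b c d : T) : 'M[T]_2 :=
  \matrix_(i < 2, j < 2)
    if (i : nat) == 0%N then (if (j : nat) == 0%N then a else b)
    else (if (j : nat) == 0%N then c else d).

Definition col3 (a b c : R) : 'cV[R]_3 :=
  \col_(i < 3) if (i : nat) == 0%N then a else if (i : nat) == 1%N then b else c.

Definition mkC (a b : R) : R[i] := Complex a b.
Definition expi (phi : R) : R[i] := mkC (cos phi) (sin phi).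

Definition adjmx (X : 'M[R[i]]_2) : 'M[R[i]]_2 := (map_mx (@conjc R) X)^T.

Definition unitary (X : 'M[R[i]]_2) : Prop := adjmx X *m X = 1%:M.

Definition skewH (P : 'M[R[i]]_2) : 'M[R[i]]_2 := (2%:R)^-1 *: (P - adjmx P).

Definition fnorm (X : 'M[R[i]]_2) : R :=
  Num.sqrt (\sum_(i < 2) \sum_(j < 2) (complex.Re (X i j) ^+ 2 + complex.Im (X i j) ^+ 2)).

(* identification of C^{2x2} with the real space R^{2x2} x R^{2x2}
   (real part, imaginary part) *)
Definition of_reim (p : 'M[R]_2 * 'M[R]_2) : 'M[R[i]]_2 :=
  \matrix_(i, j) mkC (p.1 i j) (p.2 i j).
Definition reim (X : 'M[R[i]]_2) : 'M[R]_2 * 'M[R]_2 :=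
  (map_mx (@complex.Re R) X, map_mx (@complex.Im R) X).

Definition realify (h : 'M[R[i]]_2 -> R) : 'M[R]_2 * 'M[R]_2 -> R :=
  fun p => h (of_reim p).

Definition egrad (h : 'M[R[i]]_2 -> R) (X : 'M[R[i]]_2) : 'M[R[i]]_2 :=
  \matrix_(i, j)
    mkC ('D_(delta_mx i j, 0) (realify h) (reim X))
        ('D_(0, delta_mx i j) (realify h) (reim X)).

Definition rgrad (h : 'M[R[i]]_2 -> R) (U : 'M[R[i]]_2) : 'M[R[i]]_2 :=
  U *m skewH (adjmx U *m egrad h U).

Definition Psi (theta phi : R) : 'M[R[i]]_2 :=
  mx2 (mkC (cos theta) 0) (- (mkC (sin theta) 0 * expi phi))
      (mkC (sin theta) 0 * conjc (expi phi)) (mkC (cos theta) 0).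

Definition zab (alpha beta : nat) (theta phi : R) : 'cV[R]_3 :=
  col3 (cos (alpha%:R * theta))
       (- (sin (alpha%:R * theta) * cos (beta%:R * phi)))
       (- (sin (alpha%:R * theta) * sin (beta%:R * phi))).

Definition qform (M : 'M[R]_3) (z : 'cV[R]_3) : R := (z^T *m M *m z) 0 0.

End Defs.

From HB Require Import structures.
From mathcomp Require Import all_boot all_order all_algebra.
From mathcomp Require Import all_classical all_reals all_analysis.
From mathcomp Require Import complex.
From mathcomp Require Import ring lra.
Set Implicit Arguments.
Unset Strict Implicit.
Unset Printing Implicit Defensive.
Import Order.TTheory GRing.Theory Num.Theory.
Import numFieldNormedType.Exports.
Local Open Scope ring_scope.
Local Open Scope classical_set_scope.

(* Along theta |-> Psi(theta, phi) we have h = z^T M z + C with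
   z(0, phi) = e1 and z(theta_s, phi_s) = w, so h(Psi_s) - h(I) = l1 - M11.
   Differentiating h at I along these curves, and along the diagonal phases
   (which leave h constant), shows that grad h(I) = skew(nabla h(I)) has a
   single off-diagonal entry X + iY with X cos phi - Y sin phi
   = -alpha (M21 cos(beta phi) + M31 sin(beta phi)) for every phi, whence
   ||grad h(I)|| <= sqrt 2 alpha |(M21, M31)|.  Since e1 lies in the span of
   w and a second eigenvector (u1 = 0 or v1 = 0), the first column of M gives
   l1 - M11 = (l1 - l) (1 - w1^2) and |(M21, M31)| = (l1 - l) w1 sqrt(1 - w1^2).
   Finally ||Psi_s - I||^2 = 4 - 4 cos theta_s <= 4 (1 - w1), because
   w1 = cos(alpha theta_s) and cos decreases on [0, pi/2]; the inequality
   a^2 (1 - a) <= 4 (1 - a^2) for a = w1 in [0, 1] then closes the estimate. *)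

Section CurveDerivative.
Variables (R : realType) (V : normedModType R).

Lemma is_deriveZl (E : V) (f : R -> R) (x df : R) :
  is_derive x 1 f df -> is_derive x 1 (fun t => f t *: E) (df *: E).
Proof.
move=> [fx <-]; have dfx : differentiable f x by apply/derivable1_diffP.
apply: DeriveDef; first exact/derivable1_diffP/differentiableZl.
by rewrite deriveE ?diffZl ?deriveE //; exact: differentiableZl.
Qed.

Lemma is_derive_circle (A B K : V) :
  is_derive (0 : R) 1 (fun t : R => cos t *: A + sin t *: B + K) B.
Proof.
apply: (is_derive_eq (is_deriveD (is_deriveD (is_deriveZl A (is_derive_cos 0))
  (is_deriveZl B (is_derive_sin 0))) (is_derive_cst K (0 : R) 1))).
by rewrite sin0 cos0 oppr0 scale0r scale1r add0r addr0.
Qed.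

Lemma is_derive_diff_comp (W : normedModType R) (F : V -> W) (g : R -> V)
    (x : R) (dg : V) :
  is_derive x 1 g dg -> differentiable F (g x) ->
  is_derive x 1 (F \o g) ('d F (g x) dg).
Proof.
move=> [gx <-] dF; have dgx : differentiable g x by apply/derivable1_diffP.
have dFg : differentiable (F \o g) x by exact: differentiable_comp.
apply: DeriveDef; first exact/derivable1_diffP.
by rewrite !deriveE // diff_comp.
Qed.

Lemma diff_along_circle (F : V -> R) (A B K : V) (q : R -> R) (dq : R) :
  differentiable F (A + K) ->
  (forall t, F (cos t *: A + sin t *: B + K) = q t) ->
  is_derive (0 : R) 1 q dq -> 'd F (A + K) B = dq.
Proof.
move=> dF Fq [_ <-].
have g0 : cos 0 *: A + sin 0 *: B + K = A + K.
  by rewrite cos0 sin0 scale1r scale0r addr0.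
rewrite -g0 in dF *.
have -> : q = F \o (fun t => cos t *: A + sin t *: B + K).
  by apply/funext => t /=; rewrite Fq.
by have [_ <-] := is_derive_diff_comp (is_derive_circle A B K) dF.
Qed.

End CurveDerivative.

Section RealFunctions.
Variable R : realType.

Lemma is_derive_mulr (a x : R) : is_derive x 1 (fun t => a * t) a.
Proof.
have -> : (fun t => a * t) = a \*: @id R by [].
by apply: is_derive_eq; rewrite [LHS]mulr1.
Qed.

Lemma is_derive_cosZ (a x : R) :
  is_derive x 1 (fun t => cos (a * t)) (- sin (a * x) * a).
Proof. exact: (@is_derive1_comp _ cos _ x _ _ (is_derive_cos _) (is_derive_mulr a x)). Qed.

Lemma is_derive_sinZ (a x : R) :
  is_derive x 1 (fun t => sin (a * t)) (cos (a * x) * a).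
Proof. exact: (@is_derive1_comp _ sin _ x _ _ (is_derive_sin _) (is_derive_mulr a x)). Qed.

Lemma cos_mulr_le (a t : R) :
  1 <= a -> 0 <= t -> t <= pi / (2 * a) -> cos (a * t) <= cos t.
Proof.
move=> a_ge1 t_ge0 t_le.
have a_gt0 : 0 < a by exact: lt_le_trans ltr01 a_ge1.
have at_le : a * t <= pi / 2.
  rewrite (_ : pi / 2 = a * (pi / (2 * a))) ?ler_pM2l //.
  by field; rewrite gt_eqF.
have t_le_at : t <= a * t by rewrite ler_peMl.
have pi_gt0 := pi_gt0 R.
have [<-|t_neq] := eqVneq t (a * t); first by [].
rewrite le_eqVlt ltr_cos ?in_itv /= ?lt_neqAle ?t_neq ?t_le_at ?orbT //.
  by apply/andP; split; lra.
by apply/andP; split; lra.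
Qed.

Lemma exists_angle (x y : R) :
  x ^+ 2 + y ^+ 2 = 1 -> exists phi : R, cos phi = x /\ sin phi = y.
Proof.
move=> hxy.
have hx : -1 <= x <= 1 by apply/andP; split; nra.
have sx : sin (acos x) = `|y|.
  by rewrite sin_acos // -hxy addrAC subrr add0r sqrtr_sqr.
have cx : cos (acos x) = x by apply: acosK; rewrite in_itv.
have [hy|hy] := leP 0 y.
  by exists (acos x); rewrite cx sx ger0_norm.
by exists (- acos x); rewrite cosN sinN cx sx ltr0_norm // opprK.
Qed.

(* Evaluate at the phase phi where (cos phi, - sin phi) is aligned with
   (X, Y), then apply Cauchy-Schwarz on the right. *)
Lemma sinusoid_amplitude_le (X Y a p q b : R) :
  (forall phi, X * cos phi - Y * sin phi = a * (p * cos (b * phi) + q * sin (b * phi))) ->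
  X ^+ 2 + Y ^+ 2 <= a ^+ 2 * (p ^+ 2 + q ^+ 2).
Proof.
move=> XY; have [r0|r_neq0] := eqVneq (X ^+ 2 + Y ^+ 2) 0.
  by rewrite r0 mulr_ge0 ?addr_ge0 ?sqr_ge0.
pose r := Num.sqrt (X ^+ 2 + Y ^+ 2).
have r_gt0 : 0 < r by rewrite sqrtr_gt0 lt_def r_neq0 addr_ge0 ?sqr_ge0.
have r2 : r ^+ 2 = X ^+ 2 + Y ^+ 2 by rewrite sqr_sqrtr // addr_ge0 ?sqr_ge0.
have [phi [cphi sphi]] : exists phi : R, cos phi = X / r /\ sin phi = - Y / r.
  by apply: exists_angle; rewrite !expr_div_n sqrrN -mulrDl -r2 divff ?sqrf_eq0 ?gt_eqF.
have := XY phi; rewrite cphi sphi.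
have -> : X * (X / r) - Y * (- Y / r) = r.
  have -> : X * (X / r) - Y * (- Y / r) = r ^+ 2 / r by rewrite r2; field; rewrite gt_eqF.
  by rewrite expr2 mulfK ?gt_eqF.
move=> hr; rewrite -r2 hr exprMn ler_wpM2l ?sqr_ge0 //.
have e : (p * cos (b * phi) + q * sin (b * phi)) ^+ 2
    + (p * sin (b * phi) - q * cos (b * phi)) ^+ 2 = p ^+ 2 + q ^+ 2.
  by rewrite -[RHS]mulr1 -(cos2Dsin2 (b * phi)); ring.
by rewrite -e lerDl sqr_ge0.
Qed.

Lemma sqrt2_scaled_le (a G k n L : R) :
  0 < a -> 0 <= n -> G <= Num.sqrt 2 * a * k -> k * n <= 4 * L ->
  Num.sqrt 2 / (8 * a) * G * n <= L.
Proof.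
move=> a_gt0 n_ge0 G_le kn_le.
have c_ge0 : 0 <= Num.sqrt 2 / (8 * a) by rewrite divr_ge0 ?sqrtr_ge0 ?mulr_ge0 ?ltW.
apply: le_trans (_ : Num.sqrt 2 / (8 * a) * (Num.sqrt 2 * a * k) * n <= _).
  by rewrite ler_wpM2r // ler_wpM2l.
have -> : Num.sqrt 2 / (8 * a) * (Num.sqrt 2 * a * k) * n = Num.sqrt 2 ^+ 2 / 8 * (k * n).
  by field; rewrite gt_eqF.
rewrite sqr_sqrtr //; lra.
Qed.

End RealFunctions.

Lemma sum_ord3 (V : nmodType) (f : 'I_3 -> V) : \sum_i f i = f 0 + f 1 + f 2%:R.
Proof.
by rewrite !big_ord_recr big_ord0 /= add0r; congr (f _ + f _ + f _); apply/val_inj.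
Qed.

Section QuadraticForm.
Variable R : realType.

Lemma qform_col3 (M : 'M[R]_3) a b c :
  qform M (col3 a b c) =
  a * (M 0 0 * a + M 0 1 * b + M 0 2%:R * c) +
  b * (M 1 0 * a + M 1 1 * b + M 1 2%:R * c) +
  c * (M 2%:R 0 * a + M 2%:R 1 * b + M 2%:R 2%:R * c).
Proof. by rewrite /qform /col3 !mxE sum_ord3 !mxE !sum_ord3 !mxE /=; ring. Qed.

Lemma is_derive_qform_zab (M : 'M[R]_3) (alpha beta : nat) (phi : R) :
  is_derive (0 : R) 1 (fun t => qform M (zab alpha beta t phi))
    (- (alpha%:R * (cos (beta%:R * phi) * (M 0 1 + M 1 0)
                    + sin (beta%:R * phi) * (M 0 2%:R + M 2%:R 0)))).
Proof.
set a := alpha%:R; set x := cos (beta%:R * phi); set y := sin (beta%:R * phi).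
have hc := is_derive_cosZ a 0; have hs := is_derive_sinZ a 0.
pose k := - (x * (M 0 1 + M 1 0) + y * (M 0 2%:R + M 2%:R 0)).
pose k' := M 1 1 * x ^+ 2 + (M 1 2%:R + M 2%:R 1) * x * y + M 2%:R 2%:R * y ^+ 2.
have := is_deriveD (is_deriveD (is_deriveZ (M 0 0) (is_deriveM hc hc))
  (is_deriveZ k (is_deriveM hc hs))) (is_deriveZ k' (is_deriveM hs hs)).
set f := (X in is_derive _ _ X _).
have -> : f = (fun t => qform M (zab alpha beta t phi)).
  apply/funext => t; rewrite /f /zab qform_col3 /GRing.scale_fun !fctE.
  by rewrite /k /k' /a /x /y /GRing.scale /=; ring.
move/is_derive_eq; apply.
by rewrite !mulr0 cos0 sin0 /k /GRing.scale /=; ring.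
Qed.

End QuadraticForm.

Ltac case_ord2 i := let H := fresh in case: i => [[|[|//]] H].

Ltac mx2_entrywise :=
  apply/matrixP; let i := fresh "i" in let j := fresh "j" in
  intros i j; rewrite !mxE /=; case_ord2 i; case_ord2 j => /=.

Section Matrix2.
Variable T : comNzRingType.
Implicit Types a b c d e f g k : T.

Lemma mx2_eta (A : 'M[T]_2) : A = mx2 (A 0 0) (A 0 1) (A 1 0) (A 1 1).
Proof. by mx2_entrywise; congr (A _ _); exact/val_inj. Qed.

Lemma mx2_mul a b c d e f g k :
  mx2 a b c d *m mx2 e f g k =
  mx2 (a * e + b * g) (a * f + b * k) (c * e + d * g) (c * f + d * k).
Proof.
apply/matrixP => i j; rewrite !mxE !big_ord_recr big_ord0 /= !mxE add0r.
by case_ord2 i; case_ord2 j.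
Qed.

Lemma mx2_1 : (1%:M : 'M[T]_2) = mx2 1 0 0 1.
Proof. by mx2_entrywise. Qed.

Lemma mx2_add a b c d e f g k :
  mx2 a b c d + mx2 e f g k = mx2 (a + e) (b + f) (c + g) (d + k).
Proof. by mx2_entrywise. Qed.

Lemma mx2_opp a b c d : - mx2 a b c d = mx2 (- a) (- b) (- c) (- d).
Proof. by mx2_entrywise. Qed.

Lemma mx2_scale k a b c d : k *: mx2 a b c d = mx2 (k * a) (k * b) (k * c) (k * d).
Proof. by mx2_entrywise. Qed.

End Matrix2.

Section UnitaryGroup2.
Variable R : realType.

Lemma complexP (x y : R[i]) :
  complex.Re x = complex.Re y -> complex.Im x = complex.Im y -> x = y.
Proof. by case: x y => [a b] [c d] /= -> ->. Qed.

Lemma adjmx_mx2 (a b c d : R[i]) : adjmx (mx2 a b c d) = mx2 a^* c^* b^* d^*.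
Proof. by mx2_entrywise. Qed.

Lemma adjmx1 : adjmx (1%:M : 'M[R[i]]_2) = 1%:M.
Proof. by rewrite mx2_1 adjmx_mx2; congr mx2; apply: complexP => /=; rewrite ?oppr0. Qed.

Lemma realify_reim (h : 'M[R[i]]_2 -> R) (X : 'M[R[i]]_2) : realify h (reim X) = h X.
Proof. by rewrite /realify; congr h; apply/matrixP => i j; rewrite !mxE; case: (X i j). Qed.

Definition phase (a b : R) : 'M[R[i]]_2 := mx2 (expi a) 0 0 (expi b).

Lemma unitary_phase (a b : R) : unitary (phase a b).
Proof.
rewrite /unitary /phase adjmx_mx2 mx2_mul mx2_1.
by congr mx2; apply: complexP => /=; simpc; rewrite -?expr2 ?cos2Dsin2 // mulrC subrr.
Qed.

Lemma is_diag_phase (a b : R) : is_diag_mx (phase a b).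
Proof. by apply/is_diag_mxP => i j; rewrite !mxE; case_ord2 i; case_ord2 j. Qed.

Lemma phase0 : phase 0 0 = 1%:M.
Proof. by rewrite /phase /expi /mkC cos0 sin0 mx2_1. Qed.

Lemma unitary1 : unitary (1%:M : 'M[R[i]]_2).
Proof. by rewrite -phase0; exact: unitary_phase. Qed.

Lemma reim_phase_l (t : R) : reim (phase t 0) =
  cos t *: (mx2 1 0 0 0, 0) + sin t *: (0, mx2 1 0 0 0) + (mx2 0 0 0 1, 0).
Proof. by rewrite /phase /expi /mkC cos0 sin0; congr pair; mx2_entrywise; simpc. Qed.

Lemma reim_phase_r (t : R) : reim (phase 0 t) =
  cos t *: (mx2 0 0 0 1, 0) + sin t *: (0, mx2 0 0 0 1) + (mx2 1 0 0 0, 0).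
Proof. by rewrite /phase /expi /mkC cos0 sin0; congr pair; mx2_entrywise; simpc. Qed.

Definition Psi_tangent (phi : R) : 'M[R]_2 * 'M[R]_2 :=
  (mx2 0 (- cos phi) (cos phi) 0, mx2 0 (- sin phi) (- sin phi) 0).

Lemma reim_Psi (t phi : R) :
  reim (Psi t phi) = cos t *: (mx2 1 0 0 1, 0) + sin t *: Psi_tangent phi + 0.
Proof. by rewrite /Psi /expi /mkC; congr pair; mx2_entrywise; simpc. Qed.

Lemma Psi00 : Psi (0 : R) 0 = 1%:M.
Proof.
by rewrite /Psi /expi /mkC cos0 sin0 mx2_1; congr mx2; apply: complexP => /=; simpc.
Qed.

Lemma fnorm_mx2 (a b c d : R[i]) : fnorm (mx2 a b c d) =
  Num.sqrt (complex.Re a ^+ 2 + complex.Im a ^+ 2 + (complex.Re b ^+ 2 + complex.Im b ^+ 2)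
    + (complex.Re c ^+ 2 + complex.Im c ^+ 2 + (complex.Re d ^+ 2 + complex.Im d ^+ 2))).
Proof. by rewrite /fnorm !big_ord_recr !big_ord0 /= !mxE /= !add0r addrA. Qed.

Lemma fnorm_Psi_sub1 (t phi : R) : fnorm (Psi t phi - 1%:M) = Num.sqrt (4 - 4 * cos t).
Proof.
rewrite /Psi mx2_1 mx2_opp mx2_add fnorm_mx2 /expi /mkC /=; simpc; congr Num.sqrt.
transitivity (2 * (cos t - 1) ^+ 2 + 2 * sin t ^+ 2 * (cos phi ^+ 2 + sin phi ^+ 2)).
  by ring.
rewrite cos2Dsin2 mulr1.
have -> : sin t ^+ 2 = 1 - cos t ^+ 2 by rewrite -(cos2Dsin2 t) addrC addKr.
ring.
Qed.

Lemma fnorm_skewH (g00 g01 g10 g11 : R[i]) :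
  complex.Im g00 = 0 -> complex.Im g11 = 0 ->
  fnorm (skewH (mx2 g00 g01 g10 g11)) =
  Num.sqrt (2 * (((complex.Re g10 - complex.Re g01) / 2) ^+ 2
               + ((complex.Im g10 + complex.Im g01) / 2) ^+ 2)).
Proof.
case: g00 g01 g10 g11 => [a00 b00] [a01 b01] [a10 b10] [a11 b11] /= -> ->.
rewrite /skewH; have -> : (2%:R : R[i])^-1 = Complex 2^-1 0.
  by rewrite -(rmorph_nat (real_complex R) 2) -fmorphV.
rewrite adjmx_mx2 mx2_opp mx2_add mx2_scale fnorm_mx2 /=; simpc.
by congr Num.sqrt; field.
Qed.

End UnitaryGroup2.

Section GradientAtIdentity.
Variables (R : realType) (h : 'M[R[i]]_2 -> R) (alpha beta : nat).
Variables (M : 'M[R]_3) (C : R).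
Hypothesis h_diff1 : differentiable (realify h) (reim 1%:M).
Hypothesis h_phase : forall a b : R, h (phase a b) = h 1%:M.
Hypothesis h_Psi : forall theta phi : R,
  h (Psi theta phi) = qform M (zab alpha beta theta phi) + C.
Hypothesis M_sym : M^T = M.

Let dh := 'd (realify h) (reim (1%:M : 'M[R[i]]_2)).

Lemma dh_along_curve (U : R -> 'M[R[i]]_2) (A B K : 'M[R]_2 * 'M[R]_2)
    (q : R -> R) (dq : R) :
  A + K = reim 1%:M -> (forall t, reim (U t) = cos t *: A + sin t *: B + K) ->
  (forall t, h (U t) = q t) -> is_derive (0 : R) 1 q dq -> dh B = dq.
Proof.
move=> AK UE hU; rewrite /dh -AK; apply: diff_along_circle => [|t].
  by rewrite AK.
by rewrite -UE realify_reim.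
Qed.

Lemma dh_phase_l : dh (0, mx2 1 0 0 0) = 0.
Proof.
apply: (dh_along_curve (U := fun t => phase t 0) _ (@reim_phase_l R) _
  (is_derive_cst (h 1%:M) _ _)) => [|t].
  by rewrite mx2_1 /reim; congr pair; mx2_entrywise; rewrite ?(addr0, add0r).
exact: h_phase.
Qed.

Lemma dh_phase_r : dh (0, mx2 0 0 0 1) = 0.
Proof.
apply: (dh_along_curve (U := phase 0) _ (@reim_phase_r R) _
  (is_derive_cst (h 1%:M) _ _)) => [|t].
  by rewrite mx2_1 /reim; congr pair; mx2_entrywise; rewrite ?(addr0, add0r).
exact: h_phase.
Qed.

Lemma dh_Psi_tangent (phi : R) : dh (Psi_tangent phi) =
  - (alpha%:R * (cos (beta%:R * phi) * (M 0 1 + M 1 0)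
                 + sin (beta%:R * phi) * (M 0 2%:R + M 2%:R 0))).
Proof.
apply: (dh_along_curve (U := fun t => Psi t phi) _ (fun t => reim_Psi t phi) (h_Psi^~ phi)).
  by rewrite addr0 mx2_1 /reim; congr pair; mx2_entrywise.
rewrite -[X in is_derive _ _ _ X]addr0.
exact: is_deriveD (is_derive_qform_zab M alpha beta phi) (is_derive_cst C (0 : R) 1).
Qed.

(* gX + i gY is the (1, 0) entry of grad h(I) = skew(nabla h(I)); its diagonal
   entries vanish by dh_phase_l and dh_phase_r. *)
Let g := egrad h 1%:M.
Let gX := (complex.Re (g 1 0) - complex.Re (g 0 1)) / 2.
Let gY := (complex.Im (g 1 0) + complex.Im (g 0 1)) / 2.

Lemma egrad1E (i j : 'I_2) : g i j = mkC (dh (delta_mx i j, 0)) (dh (0, delta_mx i j)).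
Proof. by rewrite /g /egrad mxE !deriveE. Qed.

Lemma fnorm_rgrad1 : fnorm (rgrad h 1%:M) = Num.sqrt (2 * (gX ^+ 2 + gY ^+ 2)).
Proof.
rewrite /rgrad adjmx1 !mul1mx -/g [g]mx2_eta fnorm_skewH // egrad1E /=.
  by rewrite -dh_phase_l; congr (dh (0, _)); mx2_entrywise.
by rewrite -dh_phase_r; congr (dh (0, _)); mx2_entrywise.
Qed.

Lemma rgrad1_sinusoid (phi : R) :
  gX * cos phi - gY * sin phi =
  - alpha%:R * (M 1 0 * cos (beta%:R * phi) + M 2%:R 0 * sin (beta%:R * phi)).
Proof.
have tangentE : Psi_tangent phi =
    cos phi *: ((delta_mx 1 0, 0) - (delta_mx 0 1, 0))
    - sin phi *: ((0, delta_mx 0 1) + (0, delta_mx 1 0)).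
  by rewrite /Psi_tangent; congr pair; mx2_entrywise; rewrite /GRing.scale /=; ring.
have := dh_Psi_tangent phi; rewrite tangentE linearB !linearZ linearB linearD /=.
have sym i j : M i j = M j i by rewrite -[in LHS]M_sym mxE.
rewrite /gX /gY !egrad1E /= (sym 0 1) (sym 0 2%:R) /GRing.scale /= => e.
lra.
Qed.

Lemma fnorm_rgrad1_le :
  fnorm (rgrad h 1%:M) <= Num.sqrt 2 * alpha%:R * Num.sqrt (M 1 0 ^+ 2 + M 2%:R 0 ^+ 2).
Proof.
have := sinusoid_amplitude_le rgrad1_sinusoid; rewrite sqrrN => bound.
rewrite fnorm_rgrad1 -[alpha%:R]ger0_norm // -sqrtr_sqr -!sqrtrM ?sqr_ge0 //.
rewrite ler_sqrt; last by rewrite !mulr_ge0 ?addr_ge0 ?sqr_ge0.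
by rewrite -!mulrA ler_wpM2l // mulrA -expr2.
Qed.

End GradientAtIdentity.

Section SpectralDecomposition.
Variable F : comUnitRingType.

Lemma orthonormal3_resolution (w u v : 'cV[F]_3) :
  w^T *m w = 1%:M -> u^T *m u = 1%:M -> v^T *m v = 1%:M ->
  w^T *m u = 0 -> w^T *m v = 0 -> u^T *m v = 0 ->
  w *m w^T + u *m u^T + v *m v^T = 1%:M.
Proof.
move=> ww uu vv wu wv uv.
pose Q : 'M[F]_(3, 1 + (1 + 1)) := row_mx w (row_mx u v).
have tr0 (x y : 'cV[F]_3) : x^T *m y = 0 -> y^T *m x = 0.
  by move=> xy; rewrite -[y^T *m x]trmxK trmx_mul trmxK xy trmx0.
have QQ : Q^T *m Q = 1%:M.
  rewrite /Q !tr_row_mx !mul_col_row !mul_mx_row !mul_col_mx.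
  rewrite ww uu vv wu wv uv (tr0 _ _ wu) (tr0 _ _ wv) (tr0 _ _ uv).
  by rewrite !row_mx0 !col_mx0 -!scalar_mx_block.
have := mulmx1C QQ.
by rewrite /Q !tr_row_mx !mul_row_col addrA.
Qed.

Lemma eigen_decomposition n (M : 'M[F]_n) (l1 l2 l3 : F) (w u v : 'cV[F]_n) :
  w *m w^T + u *m u^T + v *m v^T = 1%:M ->
  M *m w = l1 *: w -> M *m u = l2 *: u -> M *m v = l3 *: v ->
  M = l1 *: (w *m w^T) + l2 *: (u *m u^T) + l3 *: (v *m v^T).
Proof.
move=> res Mw Mu Mv.
by rewrite -[LHS]mulmx1 -res !mulmxDr !mulmxA Mw Mu Mv !scalemxAl.
Qed.

End SpectralDecomposition.

Section ColumnBound.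
Variable R : realType.

(* e1 = a w + b x for unit eigenvectors w, x with eigenvalues l' <= l, so the
   first column of M is l a w + l' b x; below w = (a, w1, w2), x = (b, x1, x2). *)
Lemma column_gap_bound (a b w1 w2 x1 x2 l l' N : R) :
  a ^+ 2 + b ^+ 2 = 1 -> w1 * a + x1 * b = 0 -> w2 * a + x2 * b = 0 ->
  a ^+ 2 + w1 ^+ 2 + w2 ^+ 2 = 1 -> l' <= l -> 0 <= a -> N <= 4 * (1 - a) ->
  Num.sqrt ((l * w1 * a + l' * x1 * b) ^+ 2 + (l * w2 * a + l' * x2 * b) ^+ 2)
    * Num.sqrt N <= 4 * (l - (l * a * a + l' * b * b)).
Proof.
move=> ab1 wx1 wx2 w_unit ll' a_ge0 N_le.
have -> : l - (l * a * a + l' * b * b) = (l - l') * b ^+ 2.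
  by rewrite -{1}[l]mulr1 -ab1; ring.
have -> : (l * w1 * a + l' * x1 * b) ^+ 2 + (l * w2 * a + l' * x2 * b) ^+ 2
    = ((l - l') * a * b) ^+ 2.
  have e1 : l * w1 * a + l' * x1 * b = (l - l') * (w1 * a) + l' * (w1 * a + x1 * b).
    by ring.
  have e2 : l * w2 * a + l' * x2 * b = (l - l') * (w2 * a) + l' * (w2 * a + x2 * b).
    by ring.
  rewrite e1 e2 wx1 wx2 !mulr0 !addr0.
  by rewrite [RHS]exprMn (_ : b ^+ 2 = w1 ^+ 2 + w2 ^+ 2); [ring | lra].
have [N_ge0|N_lt0] := lerP 0 N; last first.
  by rewrite (ltr0_sqrtr N_lt0) mulr0 mulr_ge0 // mulr_ge0 ?subr_ge0 ?sqr_ge0.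
have aN : a * Num.sqrt N <= 4 * `|b|.
  have -> : a * Num.sqrt N = Num.sqrt (a ^+ 2 * N).
    by rewrite sqrtrM ?sqr_ge0 // sqrtr_sqr ger0_norm.
  have -> : 4 * `|b| = Num.sqrt (4 ^+ 2 * b ^+ 2).
    by rewrite sqrtrM ?sqr_ge0 // !sqrtr_sqr normr_nat.
  rewrite ler_sqrt; last by rewrite mulr_ge0 ?sqr_ge0.
  have : a ^+ 2 * N <= a ^+ 2 * (4 * (1 - a)) by rewrite ler_wpM2l ?sqr_ge0.
  nra.
rewrite sqrtr_sqr !normrM (ger0_norm a_ge0) ger0_norm ?subr_ge0 //.
rewrite -real_normK ?num_real //.
rewrite (_ : _ * Num.sqrt N = (l - l') * `|b| * (a * Num.sqrt N)); last by ring.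
rewrite (_ : 4 * _ = (l - l') * `|b| * (4 * `|b|)); last by ring.
by rewrite ler_wpM2l // mulr_ge0 ?subr_ge0.
Qed.

Lemma spectral_column_bound (M : 'M[R]_3) (l1 l2 l3 N : R) (w u v : 'cV[R]_3) :
  l2 <= l1 -> l3 <= l2 ->
  M *m w = l1 *: w -> M *m u = l2 *: u -> M *m v = l3 *: v ->
  w^T *m w = 1%:M -> u^T *m u = 1%:M -> v^T *m v = 1%:M ->
  w^T *m u = 0 -> w^T *m v = 0 -> u^T *m v = 0 ->
  0 <= w 0 0 -> u 0 0 = 0 \/ v 0 0 = 0 -> N <= 4 * (1 - w 0 0) ->
  Num.sqrt (M 1 0 ^+ 2 + M 2%:R 0 ^+ 2) * Num.sqrt N <= 4 * (l1 - M 0 0).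
Proof.
move=> l12 l23 Mw Mu Mv ww uu vv wu wv uv w0_ge0 uv0 N_le.
have res := orthonormal3_resolution ww uu vv wu wv uv.
have Mi0 i : M i 0 = l1 * w i 0 * w 0 0 + l2 * u i 0 * u 0 0 + l3 * v i 0 * v 0 0.
  by rewrite {1}(eigen_decomposition res Mw Mu Mv) !mxE !big_ord1 !mxE !mulrA.
have res_i i : w i 0 * w 0 0 + u i 0 * u 0 0 + v i 0 * v 0 0 = (i == 0)%:R.
  by have := congr1 (fun A : 'M[R]_3 => A i 0) res; rewrite !mxE !big_ord1 !mxE.
have w_unit : w 0 0 ^+ 2 + w 1 0 ^+ 2 + w 2%:R 0 ^+ 2 = 1.
  by have := congr1 (fun A : 'M[R]_1 => A 0 0) ww; rewrite !mxE sum_ord3 !mxE !expr2.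
have := res_i 0; have := res_i 1; have := res_i 2%:R; rewrite !Mi0 /=.
case: uv0 => ->; rewrite !(mulr0, addr0) => *.
- by apply: column_gap_bound => //; exact: le_trans l23 l12.
- exact: column_gap_bound.
Qed.

End ColumnBound.

Theorem lemma4p9 (R : realType) (alpha beta : nat) (h : 'M[R[i]]_2 -> R)
  (M : 'M[R]_3) (C : R) (l1 l2 l3 : R) (w u v : 'cV[R]_3)
  (theta_s phi_s : R) :
  (0 < alpha)%N -> (0 < beta)%N ->
  (* h is differentiable on an open neighbourhood of U_2 (as a function of
     the 8 real coordinates of C^{2x2}) *)
  (exists O : set ('M[R]_2 * 'M[R]_2),
      open O /\ (forall U, unitary U -> O (reim U)) /\
      (forall p, O p -> differentiable (realify h) p)) ->
  (* invariance under right multiplication by diagonal unitaries *)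
  (forall P D : 'M[R[i]]_2, unitary P -> unitary D -> is_diag_mx D ->
      h (P *m D) = h P) ->
  (* quadratic representation *)
  M^T = M ->
  (forall theta phi : R,
      h (Psi theta phi) = qform M (zab alpha beta theta phi) + C) ->
  (* spectral data *)
  l1 >= l2 -> l2 >= l3 ->
  M *m w = l1 *: w -> M *m u = l2 *: u -> M *m v = l3 *: v ->
  w^T *m w = 1%:M -> u^T *m u = 1%:M -> v^T *m v = 1%:M ->
  w^T *m u = 0 -> w^T *m v = 0 -> u^T *m v = 0 ->
  0 <= w 0 0 ->
  u 0 0 = 0 \/ v 0 0 = 0 ->
  (* the maximizer *)
  0 <= theta_s -> theta_s <= pi / (2 * alpha%:R) ->
  zab alpha beta theta_s phi_s = w ->
  h (Psi theta_s phi_s) - h 1%:M >=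
    Num.sqrt 2 / (8 * alpha%:R) * fnorm (rgrad h 1%:M)
      * fnorm (Psi theta_s phi_s - 1%:M).
Proof.
move=> alpha_gt0 _ [nbhd [_ [nbhd_unitary nbhd_diff]]] h_diag M_sym h_Psi l12 l23
  Mw Mu Mv ww uu vv wu wv uv w0_ge0 uv0 theta_ge0 theta_le zw.
have h_diff1 := nbhd_diff _ (nbhd_unitary _ (unitary1 R)).
have h_phase (a b : R) : h (phase a b) = h 1%:M.
  by rewrite -[phase a b]mul1mx (h_diag _ _ (unitary1 R) (unitary_phase a b) (is_diag_phase a b)).
have h1 : h 1%:M = M 0 0 + C.
  by rewrite -Psi00 h_Psi /zab !mulr0 cos0 sin0 qform_col3; ring.
have h_max : h (Psi theta_s phi_s) = l1 + C.
  by rewrite h_Psi zw /qform -mulmxA Mw -scalemxAr mxE ww mxE mulr1.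
have w0E : w 0 0 = cos (alpha%:R * theta_s) by rewrite -zw /zab /col3 mxE.
have cos_le : cos (alpha%:R * theta_s) <= cos theta_s.
  by apply: cos_mulr_le; rewrite ?ler1n.
rewrite h_max h1 fnorm_Psi_sub1 opprD addrACA subrr addr0.
apply: sqrt2_scaled_le; rewrite ?ltr0n ?sqrtr_ge0 //.
  exact: fnorm_rgrad1_le h_diff1 h_phase h_Psi M_sym.
by apply: spectral_column_bound l12 l23 Mw Mu Mv ww uu vv wu wv uv w0_ge0 uv0 _; lra.
Qed.
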